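(* Let $C=(\mathcal P,\mathcal B,\mathcal I)$ be an $(n,\alpha,v,\rho)$-FR code with dual $C^t$. Then for every $k=1,2,\dots,n$, $$M_k(C)=\sum_{i=1}^{v}\mathbb I\big(k>N_i(C^t)\big),$$ where $\mathbb I(P)$ equals $1$ if $P$ holds and $0$ otherwise. Equivalently, with $N_0(C^t)=n$ and $N_v(C^t)=0$, for each $\ell\in\{0,1,\dots,v-1\}$ one has $M_k(C)=v-\ell$ for all integers $k$ with $N_{\ell+1}(C^t)<k\le N_\ell(C^t)$.
   Context: An incidence structure is a triple $(\mathcal P,\mathcal B,\mathcal I)$ with $\mathcal P$ (points) and $\mathcal B$ (blocks) finite sets and $\mathcal I\subseteq \mathcal P\times\mathcal B$; repeated blocks are allowed. An $(n,\alpha,v,\rho)$-FR code is an incidence structure with $|\mathcal B|=n$, $|\mathcal P|=v$, every point incident with exactly $\rho$ blocks and every block incident with exactly $\alpha$ points. The dual of $C=(\mathcal P,\mathcal B,\mathcal I)$ is $C^t=(\mathcal B,\mathcal P,\mathcal I^t)$ with $\mathcal I^t=\{(B,p):(p,B)\in\mathcal I\}$. For an incidence structure $C=(\mathcal P,\mathcal B,\mathcal I)$ and $0\le k\le|\mathcal B|$, the supported file size is $M_k(C)=\min_{\mathcal K\subseteq\mathcal B,|\mathcal K|=k}|\{p\in\mathcal P:\exists B\in\mathcal K,(p,B)\in\mathcal I\}|$ (so $M_0(C)=0$), and $N_k(C)=|\mathcal P|-M_k(C)=\max_{\mathcal K\subseteq\mathcal B,|\mathcal K|=k}|\{p\in\mathcal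 P:\nexists B\in\mathcal K,(p,B)\in\mathcal I\}|$. Thus $N_\ell(C^t)$, for $0\le \ell\le v$, is the maximum over $\ell$-subsets $\mathcal L\subseteq\mathcal P$ of the number of blocks $B\in\mathcal B$ incident with no point of $\mathcal L$. *)

From mathcomp Require Import all_boot.
Set Implicit Arguments. Unset Strict Implicit. Unset Printing Implicit Defensive.

(* An incidence structure: points of finite type P, blocks of finite type B
   (distinct elements of B may have identical incidence sets, so repeated
   blocks are allowed), and incidence relation I. *)
Record incidence := Incidence {
  pts : finType;
  blks : finType;
  inc : pts -> blks -> bool
}.

Definition dual (C : incidence) : incidence :=
  @Incidence (blks C) (pts C) (fun b p => inc p b).

Definition FR_code (C : incidence) (n alpha v rho : nat) : Prop :=
  [/\ #|blks C| = n, #|pts C| = v,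
      forall p : pts C, #|[set b : blks C | inc p b]| = rho
    & forall b : blks C, #|[set p : pts C | inc p b]| = alpha].

Definition covered (C : incidence) (K : {set blks C}) : {set pts C} :=
  [set p : pts C | [exists b in K, inc p b]].

(* M_k(C): minimum over k-subsets K of blocks of #covered points.
   (The default #|pts C| is only used when no k-subset exists, i.e. k > #|B|.) *)
Definition M (C : incidence) (k : nat) : nat :=
  \big[minn/#|pts C|]_(K : {set blks C} | #|K| == k) #|covered K|.

Definition N (C : incidence) (k : nat) : nat := #|pts C| - M C k.

From HB Require Import structures.
From mathcomp Require Import all_boot zify.

(* Both [i + M_k(C) <= v] and [k <= N_i(C^t)] say that some k blocks and some
   i points are pairwise non-incident, i.e. that the incidence matrix has a zero
   k x i submatrix; this condition is symmetric under duality.  Hence [M_k(C)]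
   is the number of [i] in [1..v] with [N_i(C^t) < k]. *)

HB.instance Definition _ := SemiGroup.isComLaw.Build nat minn minnA minnC.

Section BigMin.

Variables (I : finType) (P : pred I) (F : I -> nat) (d : nat).

Lemma bigmin_leq i : P i -> \big[minn/d]_(j | P j) F j <= F i.
Proof. by move=> Pi; rewrite (bigD1 i) //= geq_minl. Qed.

Lemma bigmin_leq_idx : \big[minn/d]_(j | P j) F j <= d.
Proof. by elim/big_rec: _ => // i x _ le_x_d; rewrite geq_min le_x_d orbT. Qed.

Lemma bigmin_attained i0 : P i0 -> (forall i, P i -> F i <= d) ->
  exists2 j, P j & \big[minn/d]_(i | P i) F i = F j.
Proof.
move=> Pi0 le_F_d.
have : \big[minn/d]_(i | P i) F i = d \/
       exists2 j, P j & \big[minn/d]_(i | P i) F i = F j.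
  apply: (big_ind (fun x => x = d \/ exists2 j, P j & x = F j)); first by left.
    by move=> x y Hx Hy; rewrite /minn; case: ifP.
  by move=> i Pi; right; exists i.
case=> // big_d; exists i0 => //; apply/eqP.
by rewrite eqn_leq bigmin_leq // big_d le_F_d.
Qed.

End BigMin.

Lemma subset_of_card (T : finType) (A : {set T}) m :
  m <= #|A| -> exists2 S : {set T}, S \subset A & #|S| = m.
Proof.
case/card_geqP=> s [uniq_s size_s sub_s_A]; exists [set x in s].
  by apply/subsetP=> x; rewrite inE => /sub_s_A.
by rewrite cardsE (card_uniqP uniq_s).
Qed.

Lemma M_leq_card (C : incidence) k : M C k <= #|pts C|.
Proof. exact: bigmin_leq_idx. Qed.

Lemma M_attained (C : incidence) k : k <= #|blks C| ->
  exists2 K : {set blks C}, #|K| = k & M C k = #|covered K|.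
Proof.
rewrite -cardsT => /subset_of_card[K0 _ card_K0].
have [||K /eqP card_K M_K] := @bigmin_attained _
  (fun K : {set blks C} => #|K| == k) (fun K => #|covered K|) #|pts C| K0.
- by rewrite card_K0.
- by move=> K _; exact: max_card.
by exists K.
Qed.

Lemma disjoint_covered_dual (C : incidence)
    (K : {set blks C}) (L : {set pts C}) :
  [disjoint L & covered K] = [disjoint K & @covered (dual C) L].
Proof.
rewrite !disjoint_subset; apply/subsetP/subsetP=> sub x x_in; rewrite !inE.
- apply/existsPn=> p; apply/negP=> /andP[pL] /= ipx.
  by have := sub p pL; rewrite !inE => /existsPn/(_ x); rewrite x_in ipx.
- apply/existsPn=> b; apply/negP=> /andP[bK] /= ixb.
  by have := sub b bK; rewrite !inE => /existsPn/(_ x); rewrite x_in /= ixb.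
Qed.

Definition zero_submatrix (C : incidence) (k i : nat) : Prop :=
  exists K : {set blks C}, exists L : {set pts C},
    [/\ #|K| = k, #|L| = i & [disjoint L & covered K]].

Lemma zero_submatrix_dual (C : incidence) k i :
  zero_submatrix (dual C) i k <-> zero_submatrix C k i.
Proof.
split=> -[K [L [card_K card_L disj]]]; exists L, K.
  by rewrite disjoint_covered_dual.
by rewrite -disjoint_covered_dual.
Qed.

Lemma zero_submatrix_M (C : incidence) k i : k <= #|blks C| ->
  zero_submatrix C k i <-> i + M C k <= #|pts C|.
Proof.
case/M_attained=> K0 card_K0 M_K0; split.
- case=> K [L [card_K card_L disj]].
  apply: leq_trans (_ : #|L| + #|covered K| <= _).
    by rewrite card_L leq_add2l; apply: bigmin_leq; rewrite /= card_K.
  by rewrite -cardsUI (disjoint_setI0 disj) cards0 addn0 max_card.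
- rewrite M_K0 addnC -leq_subRL ?max_card //.
  have -> : #|pts C| - #|covered K0| = #|~: covered K0|.
    by rewrite [#|~: _|]cardsCs setCK.
  case/subset_of_card=> L sub_L card_L.
  by exists K0, L; split=> //; rewrite -[covered K0]setCK -subsets_disjoint.
Qed.

Lemma leq_N_dual (C : incidence) k i : k <= #|blks C| -> i <= #|pts C| ->
  (k <= N (dual C) i) = (i + M C k <= #|pts C|).
Proof.
move=> le_k le_i; rewrite leq_subRL ?M_leq_card // addnC.
have dualE := zero_submatrix_M (dual C) i k le_i.
have primalE := zero_submatrix_M C k i le_k.
apply/idP/idP.
- by move/dualE/zero_submatrix_dual/primalE.
- by move/primalE/zero_submatrix_dual/dualE.
Qed.

Lemma sum_nat_ltn_add v m : \sum_(1 <= i < v.+1) (v < i + m) = minn v m.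
Proof.
elim: v => [|v IHv]; first by rewrite big_nil min0n.
rewrite big_nat_recl //.
under eq_big_nat => i _ do rewrite addSn ltnS.
by rewrite IHv; case: ltnP => /= ?; lia.
Qed.

Theorem theorem1 (C : incidence) (n alpha v rho : nat) :
  FR_code C n alpha v rho ->
  forall k : nat, 1 <= k <= n ->
    M C k = \sum_(1 <= i < v.+1) (N (dual C) i < k).
Proof.
case=> card_blks card_pts _ _ k /andP[_ le_k_n].
have le_M_v : M C k <= v by rewrite -card_pts M_leq_card.
rewrite -[LHS](minn_idPr le_M_v) -sum_nat_ltn_add.
apply: eq_big_nat => i /andP[_ le_i_v].
by rewrite !ltnNge leq_N_dual ?card_blks ?card_pts.
Qed.
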